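(* Let $G$ be a $B_2$-EPG graph given with a representation, let $a,b$ be two rows, and let $Y$ be a set of vertices all with index exactly $\{a,b\}$. Suppose the projection graph of $Y$ on $a$ is not a clique. Then there is a proper typed interval $t$ on row $a$ such that: (1) every vertex of $Y$ intersects $t$; (2) for every vertex $u$ whose index is $\{a\}$ or $\{a,c\}$ with $c\neq a,b$, $u$ is adjacent to every vertex of $Y$ if and only if $u$ contains $t$.
   Context: A graph $G$ is a $B_k$-EPG graph if each vertex $u$ can be assigned a path $P_u$ in the planar orthogonal grid with at most $k$ bends such that $uv\in E(G)$ iff $P_u$ and $P_v$ share at least one grid edge (a representation); for $B_2$-EPG graphs one assumes w.l.o.g. every path has exactly two bends. A vertex $u$ intersects a row if $P_u$ contains a grid edge of that row; the index of $u$ is the set of rows it intersects. If $a$ is in the index of $u$, $P_u^a$ is the segment of row $a$ between the two points of row $a$ where $P_u$ stops or bends. Types: $\emptyset$, $\mathsf d$, $\mathsf u$. A typed interval on row $a$ is $[x\alpha, y\beta]$ with $\alpha\le\beta$ points of row $a$ and $x,y$ types; it is proper if $\alpha\neq\beta$, or $\alpha=\beta$, $x=y$ and $x\in\{\mathsf u,\mathsf d\}$. For typed intervals $t=[x\alpha,y\beta]$, $t'=[x'\alpha',y'\beta']$ on row $a$ and an endpoint $z\gamma\in\{x'\alpha',y'\beta'\}$ of $t'$, $t$ is coherent with $z\gamma$ if (i) $\gamma\in(\alpha,\beta)$ (open interval), or (ii) $z=\emptyset$ and $[\alpha,\beta]$ contains the grid edge of $[\alpha',\beta']$ incident to $\gamma$,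 or (iii) $z\neq\emptyset$ and $z\gamma\in\{x\alpha,y\beta\}$. $t$ contains $t'$ if $[\alpha',\beta']\subseteq[\alpha,\beta]$ and $t$ is coherent with both endpoints of $t'$. $t$ intersects $t'$ if $[\alpha,\beta]\cap[\alpha',\beta']$ contains a grid edge, or $t$ is coherent with an endpoint of $t'$, or $t'$ is coherent with an endpoint of $t$. The t-projection of $u$ on $a$ is $[x\alpha,y\beta]$ where $\alpha,\beta$ are the endpoints of $P_u^a$ and the type of an endpoint $\gamma$ is $\emptyset$ if $P_u$ ends at $\gamma$, $\mathsf d$ if $P_u$ bends downwards at $\gamma$, $\mathsf u$ if upwards. A vertex contains (intersects) a typed interval $t$ on $a$ if its t-projection on $a$ contains (intersects) $t$. The projection graph of a set $Y$ of vertices whose indices contain $a$ is the graph on $Y$ in which $u,v$ are adjacent iff their t-projections on $a$ intersect. *)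

From Stdlib Require Import ZArith List.
Open Scope Z_scope.

(* Grid points are (x, y) : Z * Z; row a is the horizontal line y = a.
   Grid edges: EH x y = {(x,y),(x+1,y)} (horizontal, in row y),
               EV x y = {(x,y),(x,y+1)} (vertical). *)
Inductive gedge := EH (x y : Z) | EV (x y : Z).

(* A path with exactly two bends (B_2-EPG convention), given by its
   start point q0, its two bend points q1, q2 and its end point q3. *)
Record path2 := Path2 { q0 : Z * Z; q1 : Z * Z; q2 : Z * Z; q3 : Z * Z }.

Definition horiz (p q : Z * Z) : Prop := snd p = snd q /\ fst p <> fst q.
Definition vert (p q : Z * Z) : Prop := fst p = fst q /\ snd p <> snd q.

Definition valid2 (P : path2) : Prop :=
  (horiz (q0 P) (q1 P) /\ vert (q1 P) (q2 P) /\ horiz (q2 P) (q3 P)) \/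
  (vert (q0 P) (q1 P) /\ horiz (q1 P) (q2 P) /\ vert (q2 P) (q3 P)).

Definition seg_edge (p q : Z * Z) (e : gedge) : Prop :=
  match e with
  | EH x y => y = snd p /\ y = snd q /\ Z.min (fst p) (fst q) <= x < Z.max (fst p) (fst q)
  | EV x y => x = fst p /\ x = fst q /\ Z.min (snd p) (snd q) <= y < Z.max (snd p) (snd q)
  end.

Definition path_edge (P : path2) (e : gedge) : Prop :=
  seg_edge (q0 P) (q1 P) e \/ seg_edge (q1 P) (q2 P) e \/ seg_edge (q2 P) (q3 P) e.

Definition share_edge (P Q : path2) : Prop :=
  exists e, path_edge P e /\ path_edge Q e.

(* P intersects row a: contains a grid edge of row a *)
Definition in_index (P : path2) (a : Z) : Prop := exists x, path_edge P (EH x a).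

(* types: empty (path ends), d (bends downwards), u (bends upwards) *)
Inductive typ := Tnone | Td | Tu.

Record tint := TInt { tx : typ; ta : Z; ty : typ; tb : Z }.

Definition mk_tint (x1 : typ) (g1 : Z) (x2 : typ) (g2 : Z) : tint :=
  if g1 <=? g2 then TInt x1 g1 x2 g2 else TInt x2 g2 x1 g1.

(* type of a bend on row a whose vertical part goes towards row r *)
Definition vtype (a r : Z) : typ := if r <? a then Td else Tu.

Definition tproj (P : path2) (a : Z) : tint :=
  if snd (q0 P) =? snd (q1 P) then
    (* horizontal - vertical - horizontal *)
    if a =? snd (q0 P)
    then mk_tint Tnone (fst (q0 P)) (vtype a (snd (q2 P))) (fst (q1 P))
    else mk_tint (vtype a (snd (q1 P))) (fst (q2 P)) Tnone (fst (q3 P))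
  else
    (* vertical - horizontal - vertical *)
    mk_tint (vtype a (snd (q0 P))) (fst (q1 P)) (vtype a (snd (q3 P))) (fst (q2 P)).

Definition proper (t : tint) : Prop :=
  ta t < tb t \/ (ta t = tb t /\ tx t = ty t /\ tx t <> Tnone).

(* t coherent with endpoint z gamma; [edge_in] expresses that [alpha,beta]
   contains the grid edge of the other interval incident to gamma *)
Definition coh (t : tint) (z : typ) (g : Z) (edge_in : Prop) : Prop :=
  (ta t < g < tb t) \/
  (z = Tnone /\ edge_in) \/
  (z <> Tnone /\ ((z = tx t /\ g = ta t) \/ (z = ty t /\ g = tb t))).

Definition coh_left (t t' : tint) : Prop :=
  coh t (tx t') (ta t') (ta t' < tb t' /\ ta t <= ta t' /\ ta t' + 1 <= tb t).
Definition coh_right (t t' : tint) : Prop :=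
  coh t (ty t') (tb t') (ta t' < tb t' /\ ta t <= tb t' - 1 /\ tb t' <= tb t).

Definition tcontains (t t' : tint) : Prop :=
  ta t <= ta t' /\ tb t' <= tb t /\ coh_left t t' /\ coh_right t t'.

Definition tintersects (t t' : tint) : Prop :=
  Z.max (ta t) (ta t') + 1 <= Z.min (tb t) (tb t') \/
  coh_left t t' \/ coh_right t t' \/ coh_left t' t \/ coh_right t' t.

(* The paths of [Y] turn exactly once on row [a], towards row [b], so their
   t-projections on [a] have one free end and one bend of the fixed type
   [vtype a b].  A path [u] avoiding row [b] shares an edge with such a path
   [y] iff their segments on row [a] overlap in an edge, or [u] has an endpoint
   at the bend of [y] turning the same way.  This condition splits into "[u]
   starts before [y] ends" and "[u] ends after [y] starts", which are monotone
   in how far [y] reaches; hence [u] is adjacent to all of [Y] iff it meets the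
   member of [Y] ending leftmost and the member starting rightmost, i.e. iff it
   contains the typed interval [t] spanned between these two ends.  Since two
   members of [Y] do not intersect, [t] is a genuine interval. *)

From Stdlib Require Import ZArith List Lia Setoid Classical.
Open Scope Z_scope.

Definition typ_same (x y : typ) : Prop :=
  match x, y with Tnone, Tnone | Td, Td | Tu, Tu => True | _, _ => False end.

Lemma typ_eqE (x y : typ) : x = y <-> typ_same x y.
Proof. destruct x, y; cbn; split; easy. Qed.

(* Equations between concrete types become [True]/[False], which [lia] handles. *)
Ltac simpl_typ := rewrite ?typ_eqE in *; cbn [typ_same] in *.

Ltac case_ifs := repeat match goal with
  | |- context [if ?x <=? ?y then _ else _] => destruct (Z.leb_spec x y)
  | |- context [if ?x <? ?y then _ else _] => destruct (Z.ltb_spec x y)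
  | |- context [if ?x =? ?y then _ else _] => destruct (Z.eqb_spec x y)
  | H : context [if _ then _ else _] |- _ => revert H
  end; intros.

Definition has_endpoint (z : typ) (c : Z) (s : tint) : Prop :=
  (tx s = z /\ ta s = c) \/ (ty s = z /\ tb s = c).

Lemma vtype_neq_Tnone a r : vtype a r <> Tnone.
Proof. unfold vtype; destruct (r <? a); discriminate. Qed.

Lemma path_shape_at_row P a : valid2 P -> in_index P a ->
  (exists x0 x1 x3 c, c <> a /\ x0 <> x1 /\ x1 <> x3 /\ P = Path2 (x0,a) (x1,a) (x1,c) (x3,c)) \/
  (exists x0 x1 x3 c, c <> a /\ x0 <> x1 /\ x1 <> x3 /\ P = Path2 (x0,c) (x1,c) (x1,a) (x3,a)) \/
  (exists x1 x2 c d, c <> a /\ d <> a /\ x1 <> x2 /\ P = Path2 (x1,c) (x1,a) (x2,a) (x2,d)).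
Proof.
  destruct P as [[x0 y0] [x1 y1] [x2 y2] [x3 y3]].
  unfold valid2, horiz, vert, in_index, path_edge, seg_edge; cbn [fst snd q0 q1 q2 q3].
  intros [[[? ?] [[? ?] [? ?]]] | [[? ?] [[? ?] [? ?]]]] [x [Hx|[Hx|Hx]]];
    repeat match goal with H : _ /\ _ |- _ => destruct H end; subst.
  all: first [ exfalso; lia
   | left; do 4 eexists; refine (conj _ (conj _ (conj _ eq_refl))); lia
   | right; left; do 4 eexists; refine (conj _ (conj _ (conj _ eq_refl))); lia
   | right; right; do 4 eexists; refine (conj _ (conj _ (conj _ eq_refl))); lia ].
Qed.

Ltac case_path_shape P a Hv Hi :=
  destruct (path_shape_at_row P a Hv Hi) as
    [(x0&x1&x3&c&?&?&?&->)|[(x0&x1&x3&c&?&?&?&->)|(x1&x2&c&d&?&?&?&->)]];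
  unfold tproj, has_endpoint, path_edge, seg_edge, mk_tint, vtype in *;
  cbn [fst snd q0 q1 q2 q3] in *; rewrite ?Z.eqb_refl in *;
  repeat match goal with
    | H : ?u <> ?v |- context [?u =? ?v] => rewrite (proj2 (Z.eqb_neq u v) H)
    | H : ?u <> ?v |- context [?v =? ?u] => rewrite (proj2 (Z.eqb_neq v u) (not_eq_sym H))
    end;
  case_ifs; cbn [tx ty ta tb] in *; simpl_typ.

Section PathOnRow.

Variables (P : path2) (a : Z).
Hypotheses (P_valid : valid2 P) (P_on_a : in_index P a).

Lemma tproj_lt : ta (tproj P a) < tb (tproj P a).
Proof. case_path_shape P a P_valid P_on_a; lia. Qed.

Lemma path_hedge_iff x : path_edge P (EH x a) <-> ta (tproj P a) <= x < tb (tproj P a).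
Proof. case_path_shape P a P_valid P_on_a; lia. Qed.

Lemma tproj_endpoint_of_vedge b c0 r : b <> a -> Z.min a b <= r < Z.max a b ->
  path_edge P (EV c0 r) -> has_endpoint (vtype a b) c0 (tproj P a).
Proof. case_path_shape P a P_valid P_on_a; lia. Qed.

(* [if b <? a then a - 1 else a] indexes the vertical edge leaving row [a] towards row [b]. *)
Lemma vedge_of_tproj_endpoint b c0 : b <> a -> has_endpoint (vtype a b) c0 (tproj P a) ->
  path_edge P (EV c0 (if b <? a then a - 1 else a)).
Proof. case_path_shape P a P_valid P_on_a; lia. Qed.

End PathOnRow.

Definition bends_right (s : tint) : bool := match tx s with Tnone => true | _ => false end.

Definition bend (s : tint) : Z := if bends_right s then tb s else ta s.

(* Orders single-bend intervals by how far their right (resp. left) end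
   reaches, a bent end reaching half a unit further than a free one. *)
Definition right_key (s : tint) : Z := 2 * tb s + (if bends_right s then 1 else 0).
Definition left_key (s : tint) : Z := 2 * ta s + (if bends_right s then 1 else 0).

Lemma tintersects_sym t t' : tintersects t t' <-> tintersects t' t.
Proof. unfold tintersects. rewrite Z.max_comm, Z.min_comm. tauto. Qed.

Lemma tcontains_refl t : ta t < tb t -> tcontains t t.
Proof.
  destruct t as [[] p [] q]; unfold tcontains, coh_left, coh_right, coh; cbn; simpl_typ; lia.
Qed.

Section SingleBend.

Variable z : typ.
Hypothesis z_bent : z <> Tnone.

(* The t-projection on [a] of a path with index [{a, b}]: a free end and a
   bend of type [z] towards [b]. *)
Definition single_bend (s : tint) : Prop :=
  ta s < tb s /\ ((tx s = Tnone /\ ty s = z) \/ (tx s = z /\ ty s = Tnone)).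

Definition starts_before (u s : tint) : Prop :=
  if bends_right s then ta u < tb s \/ (ta u = tb s /\ tx u = z) else ta u < tb s.

Definition ends_after (u s : tint) : Prop :=
  if bends_right s then ta s < tb u else ta s < tb u \/ (ta s = tb u /\ ty u = z).

Definition meets (u s : tint) : Prop := starts_before u s /\ ends_after u s.

(* The interval between the right end of [sl] and the left end of [sr]. *)
Definition gap (sl sr : tint) : tint :=
  TInt (if bends_right sl then z else Tnone) (if bends_right sl then tb sl else tb sl - 1)
       (if bends_right sr then Tnone else z) (if bends_right sr then ta sr + 1 else ta sr).

Ltac unfold_single_bend :=
  unfold single_bend, meets, starts_before, ends_after, gap, bend, right_key, left_key,
    bends_right, has_endpoint, tintersects, tcontains, coh_left, coh_right, coh in *;
  cbn [tx ty ta tb] in *.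

Ltac case_single_bend s :=
  let x := fresh "x" in let p := fresh "p" in let y := fresh "y" in let q := fresh "q" in
  destruct s as [x p y q];
  let H := fresh in
  intro H; unfold single_bend in H; cbn [tx ty ta tb] in H; destruct H as [? [[-> ->]|[-> ->]]].

Lemma tintersects_single_bend u s : single_bend s -> ta u < tb u ->
  tintersects u s <-> meets u s.
Proof.
  case_single_bend s; destruct u as [[] ua [] ub]; unfold_single_bend; destruct z; simpl_typ; lia.
Qed.

Lemma meets_single_bend_iff u s : single_bend s -> ta u < tb u ->
  meets u s <-> (ta u < tb s /\ ta s < tb u) \/ has_endpoint z (bend s) u.
Proof.
  case_single_bend s; destruct u as [[] ua [] ub]; unfold_single_bend; destruct z; simpl_typ; lia.
Qed.

Lemma has_endpoint_single_bend c s : single_bend s -> has_endpoint z c s <-> c = bend s.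
Proof. case_single_bend s; unfold_single_bend; destruct z; simpl_typ; lia. Qed.

Lemma starts_before_mono u s1 s2 : single_bend s1 -> single_bend s2 ->
  right_key s1 <= right_key s2 -> starts_before u s1 -> starts_before u s2.
Proof.
  case_single_bend s1; case_single_bend s2; destruct u as [[] ua uy ub]; unfold_single_bend;
    destruct z; simpl_typ; lia.
Qed.

Lemma ends_after_mono u s1 s2 : single_bend s1 -> single_bend s2 ->
  left_key s2 <= left_key s1 -> ends_after u s1 -> ends_after u s2.
Proof.
  case_single_bend s1; case_single_bend s2; destruct u as [ux ua [] ub]; unfold_single_bend;
    destruct z; simpl_typ; lia.
Qed.

Lemma gap_lt sl sr s1 s2 : single_bend sl -> single_bend sr -> single_bend s1 -> single_bend s2 ->
  right_key sl <= right_key s1 -> right_key sl <= right_key s2 ->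
  left_key s1 <= left_key sr -> left_key s2 <= left_key sr ->
  ~ meets s1 s2 -> ta (gap sl sr) < tb (gap sl sr).
Proof.
  case_single_bend sl; case_single_bend sr; case_single_bend s1; case_single_bend s2;
    unfold_single_bend; destruct z; simpl_typ; lia.
Qed.

Lemma tcontains_gap u sl sr : single_bend sl -> single_bend sr ->
  ta (gap sl sr) < tb (gap sl sr) -> ta u < tb u ->
  tcontains u (gap sl sr) <-> starts_before u sl /\ ends_after u sr.
Proof.
  case_single_bend sl; case_single_bend sr; destruct u as [[] ua [] ub]; unfold_single_bend;
    destruct z; simpl_typ; lia.
Qed.

End SingleBend.

Section TwoRowPath.

Variables (P : path2) (a b : Z).
Hypotheses (P_valid : valid2 P) (P_index : forall r, in_index P r <-> r = a \/ r = b)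
  (a_neq_b : a <> b).

Lemma two_row_path_shape :
  (exists x0 x1 x3, x0 <> x1 /\ x1 <> x3 /\ P = Path2 (x0,a) (x1,a) (x1,b) (x3,b)) \/
  (exists x0 x1 x3, x0 <> x1 /\ x1 <> x3 /\ P = Path2 (x0,b) (x1,b) (x1,a) (x3,a)).
Proof.
  assert (P_on_b : in_index P b) by (apply P_index; right; reflexivity).
  destruct (path_shape_at_row P a P_valid (proj2 (P_index a) (or_introl eq_refl))) as
    [(x0&x1&x3&c&?&?&?&->)|[(x0&x1&x3&c&?&?&?&->)|(x1&x2&c&d&?&?&?&->)]].
  - assert (c = b) as ->; [|left; exists x0, x1, x3; auto].
    enough (c = a \/ c = b) by tauto.
    apply P_index; exists (Z.min x1 x3); unfold path_edge, seg_edge; cbn; lia.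
  - assert (c = b) as ->; [|right; exists x0, x1, x3; auto].
    enough (c = a \/ c = b) by tauto.
    apply P_index; exists (Z.min x0 x1); unfold path_edge, seg_edge; cbn; lia.
  - exfalso; destruct P_on_b as [x Hx]; unfold path_edge, seg_edge in Hx; cbn in Hx; lia.
Qed.

Lemma two_row_path_single_bend : single_bend (vtype a b) (tproj P a).
Proof.
  destruct two_row_path_shape as [(x0&x1&x3&?&?&->)|(x0&x1&x3&?&?&->)];
    unfold single_bend, tproj, mk_tint, vtype; cbn [fst snd q0 q1 q2 q3]; rewrite ?Z.eqb_refl;
    [|rewrite (proj2 (Z.eqb_neq a b) a_neq_b)];
    case_ifs; cbn [tx ty ta tb]; simpl_typ; lia.
Qed.

Lemma two_row_path_vedge c0 r : path_edge P (EV c0 r) -> Z.min a b <= r < Z.max a b.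
Proof.
  destruct two_row_path_shape as [(x0&x1&x3&?&?&->)|(x0&x1&x3&?&?&->)];
    unfold path_edge, seg_edge; cbn [fst snd q0 q1 q2 q3]; lia.
Qed.

End TwoRowPath.

(* A path avoiding row [b] can share with [Py] only edges of row [a] or the
   vertical edges between rows [a] and [b], and the latter only at the bend
   of [Py]'s t-projection, where it must bend the same way. *)
Lemma share_edge_iff_meets Pu Py a b : valid2 Pu -> valid2 Py -> in_index Pu a -> ~ in_index Pu b ->
  (forall r, in_index Py r <-> r = a \/ r = b) -> a <> b ->
  share_edge Pu Py <-> meets (vtype a b) (tproj Pu a) (tproj Py a).
Proof.
  intros Pu_valid Py_valid Pu_on_a Pu_off_b Py_index a_neq_b.
  assert (Py_on_a : in_index Py a) by (apply Py_index; left; reflexivity).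
  pose proof (two_row_path_single_bend Py a b Py_valid Py_index a_neq_b) as Py_bend.
  rewrite (meets_single_bend_iff _ (vtype_neq_Tnone a b) _ _ Py_bend (tproj_lt Pu a Pu_valid Pu_on_a)).
  split.
  - intros [[x r|c0 r] [Hu Hy]].
    + assert (r = a \/ r = b) as Hr by (apply Py_index; exists x; exact Hy).
      destruct Hr as [->| ->].
      * rewrite path_hedge_iff in Hu, Hy by assumption; left; lia.
      * contradiction Pu_off_b; exists x; exact Hu.
    + pose proof (two_row_path_vedge Py a b Py_valid Py_index a_neq_b c0 r Hy) as Hr.
      pose proof (tproj_endpoint_of_vedge Pu a Pu_valid Pu_on_a b c0 r (not_eq_sym a_neq_b) Hr Hu) as Hu_end.
      pose proof (tproj_endpoint_of_vedge Py a Py_valid Py_on_a b c0 r (not_eq_sym a_neq_b) Hr Hy) as Hy_end.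
      rewrite (has_endpoint_single_bend _ (vtype_neq_Tnone a b) _ _ Py_bend) in Hy_end.
      subst c0; right; exact Hu_end.
  - intros [Hoverlap|Hu_end].
    + exists (EH (Z.max (ta (tproj Pu a)) (ta (tproj Py a))) a).
      rewrite !path_hedge_iff by assumption.
      pose proof (tproj_lt Pu a Pu_valid Pu_on_a); pose proof (tproj_lt Py a Py_valid Py_on_a); lia.
    + exists (EV (bend (tproj Py a)) (if b <? a then a - 1 else a)); split.
      * exact (vedge_of_tproj_endpoint Pu a Pu_valid Pu_on_a b _ (not_eq_sym a_neq_b) Hu_end).
      * apply (vedge_of_tproj_endpoint Py a Py_valid Py_on_a b _ (not_eq_sym a_neq_b)).
        now apply (has_endpoint_single_bend _ (vtype_neq_Tnone a b) _ _ Py_bend).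
Qed.

Lemma exists_argmin_in_list {V : Type} (Q : V -> Prop) (f : V -> Z) (l : list V) :
  (exists v, Q v /\ In v l) ->
  exists m, Q m /\ In m l /\ forall w, Q w -> In w l -> f m <= f w.
Proof.
  induction l as [|x l IH]; intros [v [Qv Hv]]; [destruct Hv|].
  destruct (classic (exists v, Q v /\ In v l)) as [Hl|Hl].
  - destruct (IH Hl) as (m & Qm & Hm & m_min).
    destruct (classic (Q x /\ f x < f m)) as [[Qx Hx]|Hx].
    + exists x; repeat split; [exact Qx | now left |].
      intros w Qw [<-|Hw]; [lia|]. specialize (m_min w Qw Hw); lia.
    + exists m; repeat split; [exact Qm | now right |].
      intros w Qw [<-|Hw]; [|auto].
      destruct (Z.lt_ge_cases (f x) (f m)); [exfalso; auto | lia].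
  - destruct Hv as [<-|Hv]; [|contradiction Hl; eauto].
    exists x; repeat split; [exact Qv | now left |].
    intros w Qw [<-|Hw]; [lia | contradiction Hl; eauto].
Qed.

(* Every interval meeting the member reaching least far right and the member
   reaching least far left meets the whole family, by monotonicity. *)
Lemma gap_of_finite_family (V : Type) (Y : V -> Prop) (s : V -> tint) (z : typ) :
  z <> Tnone -> (exists l : list V, forall v, In v l) ->
  (forall y, Y y -> single_bend z (s y)) ->
  (exists y1 y2, Y y1 /\ Y y2 /\ ~ tintersects (s y1) (s y2)) ->
  exists t, proper t /\ (forall y, Y y -> tintersects (s y) t) /\
    (forall u, ta u < tb u -> (forall y, Y y -> meets z u (s y)) <-> tcontains u t).
Proof.
  intros z_bent [l l_full] s_bend (y1 & y2 & Hy1 & Hy2 & y12_disjoint).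
  destruct (exists_argmin_in_list Y (fun v => right_key (s v)) l (ex_intro _ y1 (conj Hy1 (l_full y1))))
    as (yl & Hyl & _ & yl_min).
  destruct (exists_argmin_in_list Y (fun v => - left_key (s v)) l (ex_intro _ y1 (conj Hy1 (l_full y1))))
    as (yr & Hyr & _ & yr_max).
  set (t := gap z (s yl) (s yr)).
  assert (meets_all : forall u, starts_before z u (s yl) -> ends_after z u (s yr) ->
            forall y, Y y -> meets z u (s y)).
  { intros u Hl Hr y Hy; split.
    - exact (starts_before_mono z z_bent u _ _ (s_bend yl Hyl) (s_bend y Hy) (yl_min y Hy (l_full y)) Hl).
    - assert (left_key (s y) <= left_key (s yr)) by (specialize (yr_max y Hy (l_full y)); lia).
      exact (ends_after_mono z z_bent u _ _ (s_bend yr Hyr) (s_bend y Hy) H Hr). }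
  assert (t_lt : ta t < tb t).
  { rewrite (tintersects_single_bend z z_bent _ _ (s_bend y2 Hy2) (proj1 (s_bend y1 Hy1))) in y12_disjoint.
    pose proof (yr_max y1 Hy1 (l_full y1)); pose proof (yr_max y2 Hy2 (l_full y2)).
    apply (gap_lt z z_bent _ _ (s y1) (s y2)); auto; lia. }
  exists t; split; [left; exact t_lt|]; split.
  - intros y Hy. apply tintersects_sym, (tintersects_single_bend z z_bent _ _ (s_bend y Hy) t_lt).
    destruct (proj1 (tcontains_gap z z_bent t _ _ (s_bend yl Hyl) (s_bend yr Hyr) t_lt t_lt)
                (tcontains_refl t t_lt)) as [Hl Hr].
    exact (meets_all t Hl Hr y Hy).
  - intros u u_lt. unfold t; rewrite (tcontains_gap z z_bent u _ _ (s_bend yl Hyl) (s_bend yr Hyr) t_lt u_lt).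
    split.
    + intros Hu; exact (conj (proj1 (Hu yl Hyl)) (proj2 (Hu yr Hyr))).
    + intros [Hl Hr]; exact (meets_all u Hl Hr).
Qed.

Theorem lemma5 (V : Type) (E : V -> V -> Prop) (P : V -> path2)
  (Vfin : exists l : list V, forall v, In v l)
  (Pvalid : forall v, valid2 (P v))
  (Prep : forall u v, u <> v -> (E u v <-> share_edge (P u) (P v)))
  (a b : Z) (hab : a <> b) (Y : V -> Prop)
  (HY : forall y, Y y -> forall r, in_index (P y) r <-> (r = a \/ r = b))
  (Hnc : exists y1 y2, Y y1 /\ Y y2 /\ y1 <> y2 /\
          ~ tintersects (tproj (P y1) a) (tproj (P y2) a)) :
  exists t : tint, proper t /\
    (forall y, Y y -> tintersects (tproj (P y) a) t) /\
    (forall u,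
       ((forall r, in_index (P u) r <-> r = a) \/
        (exists c, c <> a /\ c <> b /\
           (forall r, in_index (P u) r <-> (r = a \/ r = c)))) ->
       ((forall y, Y y -> E u y) <-> tcontains (tproj (P u) a) t)).
Proof.
  destruct Hnc as (y1 & y2 & Hy1 & Hy2 & _ & y12_disjoint).
  destruct (gap_of_finite_family V Y (fun v => tproj (P v) a) (vtype a b) (vtype_neq_Tnone a b) Vfin
              (fun y Hy => two_row_path_single_bend (P y) a b (Pvalid y) (HY y Hy) hab)
              (ex_intro _ y1 (ex_intro _ y2 (conj Hy1 (conj Hy2 y12_disjoint)))))
    as (t & t_proper & t_meets & t_contains).
  exists t; split; [exact t_proper|]; split; [exact t_meets|].
  intros u u_index.
  assert (u_on_a : in_index (P u) a) by (destruct u_index as [H|(c & _ & _ & H)]; apply H; auto).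
  assert (u_off_b : ~ in_index (P u) b).
  { intros Hb; destruct u_index as [H|(c & Hca & Hcb & H)]; apply H in Hb; [congruence|].
    destruct Hb; congruence. }
  assert (adj_iff : forall y, Y y -> E u y <-> meets (vtype a b) (tproj (P u) a) (tproj (P y) a)).
  { intros y Hy.
    assert (u <> y) by (intros ->; apply u_off_b, (HY y Hy); right; reflexivity).
    rewrite Prep by assumption.
    exact (share_edge_iff_meets _ _ a b (Pvalid u) (Pvalid y) u_on_a u_off_b (HY y Hy) hab). }
  rewrite <- (t_contains _ (tproj_lt (P u) a (Pvalid u) u_on_a)).
  split; intros H y Hy; apply (adj_iff y Hy); auto.
Qed.
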